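(* Let $n\in\mathbb N$ and let $\mu$ be any probability measure on $[n]=\{1,\dots,n\}$. Fix $q,z\in\mathbb N$ with $z\ge 2n^{1-1/q}$. Let $x_1,\dots,x_{qz}$ be chosen independently at random according to $\mu$. Then $$\Pr\Big(\exists\, i_1,\dots,i_q \text{ with } (j-1)z<i_j\le jz \text{ for each } j,\ x_{i_1}=x_{i_2}=\dots=x_{i_q}\Big)\ \ge\ 1-e^{-cz/n^{1-1/q}}$$ for any $c\le -\tfrac14\ln(1-2^{-q})$, and in particular for any $c\le 2^{-q-2}$. *)

From HB Require Import structures.
From mathcomp Require Import all_boot all_order all_algebra.
From mathcomp Require Import all_classical all_reals.
From mathcomp Require Import all_analysis.
Set Implicit Arguments. Unset Strict Implicit. Unset Printing Implicit Defensive.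
Import Order.TTheory GRing.Theory Num.Theory.
Local Open Scope ring_scope.

(* A probability measure on [n] = {0,...,n-1} (0-based indexing). *)
Definition is_prob_measure (R : realType) (n : nat) (mu : 'I_n -> R) : Prop :=
  (forall k, 0 <= mu k) /\ \sum_(k < n) mu k = 1.

(* The event: there exist i_1,...,i_q with i_j in the j-th block of length z
   (0-based: j*z <= i_j < (j+1)*z) and x_{i_1} = ... = x_{i_q}. *)
Definition block_collision (n q z : nat) (x : {ffun 'I_(q * z) -> 'I_n}) : bool :=
  [exists i : {ffun 'I_q -> 'I_(q * z)},
     [forall j : 'I_q, (j * z <= i j)%N && (i j < j.+1 * z)%N] &&
     [forall j : 'I_q, forall j' : 'I_q, x (i j) == x (i j')]].

Definition iid_prob (R : realType) (n m : nat) (mu : 'I_n -> R)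
    (E : pred {ffun 'I_m -> 'I_n}) : R :=
  \sum_(x : {ffun 'I_m -> 'I_n} | E x) \prod_(i < m) mu (x i).

From HB Require Import structures.
From mathcomp Require Import all_boot all_order all_algebra.
From mathcomp Require Import zify.
From mathcomp Require Import all_classical all_reals.
From mathcomp Require Import all_analysis.
From mathcomp Require Import ring lra.
Import Order.TTheory GRing.Theory Num.Theory.
Local Open Scope ring_scope.
Set Implicit Arguments. Unset Strict Implicit. Unset Printing Implicit Defensive.

(* Cut each of the [q] blocks into [k = z %/ S] sub-blocks of length
   [S ~ 4/3 n^(1-1/q)]; round [r] succeeds when some value occurs in the [r]-th
   sub-block of every block.  Different rounds read disjoint coordinates, so they
   fail independently, and it suffices that each succeeds with probability
   [2^-q]: then the failure probability is at most [(1 - 2^-q)^k], which is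
   [exp (- c z / n^(1-1/q))] for [c <= - ln (1 - 2^-q) / 4].
   For one round, let [p_v = 1 - (1 - mu v)^S] be the probability that [v] is hit
   in a given sub-block.  If some [p_v >= 1/2], the value [v] alone does it.
   Otherwise [p_v >= S mu_v / 2], and the second moment method applies to the
   number [N] of values hit in all [q] sub-blocks: hits of distinct values are
   negatively correlated, so [E N^2 <= E N + (E N)^2], while the power mean
   inequality [sum mu_v^q >= n^(1-q)] gives [(2^q - 1) E N >= 1]. *)

Lemma one_subX_ge (R : realDomainType) (a : R) (s : nat) :
  0 <= a <= 1 -> s%:R * (1 - a) * a ^+ s <= 1 - a ^+ s.
Proof.
move=> /andP [a_ge0 a_le1]; elim: s => [|s IH]; first by rewrite !mul0r expr0 subrr.
have aXs_ge0 : 0 <= a ^+ s by rewrite exprn_ge0.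
have aXS_le : a ^+ s.+1 <= a ^+ s by rewrite exprS ler_piMl.
have : s%:R * (1 - a) * a ^+ s.+1 <= s%:R * (1 - a) * a ^+ s.
  by rewrite ler_wpM2l // mulr_ge0 ?ler0n ?subr_ge0.
have : (1 - a) * a ^+ s.+1 <= (1 - a) * a ^+ s by rewrite ler_wpM2l ?subr_ge0.
rewrite -natr1 exprS; nra.
Qed.

Lemma hit_prob_ge (R : realFieldType) (m : R) (s : nat) :
  0 <= m <= 1 -> 2^-1 < (1 - m) ^+ s -> s%:R / 2 * m <= 1 - (1 - m) ^+ s.
Proof.
move=> /andP [m_ge0 m_le1] half_lt; have := @one_subX_ge _ (1 - m) s.
rewrite subr_ge0 m_le1 lerBlDr lerDl m_ge0 => /(_ isT).
have : 0 <= s%:R * m by rewrite mulr_ge0 ?ler0n.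
nra.
Qed.

Lemma ratio_ge_half_pow (R : realFieldType) (q : nat) (a : R) :
  0 <= a -> 1 <= (2 ^+ q - 1) * a -> 2^-1 ^+ q <= a / (1 + a).
Proof.
move=> a_ge0 le1; have two_q : 1 <= 2 ^+ q :> R by rewrite exprn_ege1 ?ler1n.
rewrite exprVn ler_pdivlMr ?ltr_wpDr // mulrC ler_pdivrMr; last by lra.
nra.
Qed.

Section ProductMeasure.
Variables (R : realType) (I T : finType) (mu : T -> R).
Hypothesis mu_ge0 : forall t, 0 <= mu t.
Hypothesis mu_sum1 : \sum_t mu t = 1.

Definition prod_weight (x : {ffun I -> T}) : R := \prod_i mu (x i).

Definition expect (h : {ffun I -> T} -> R) : R := \sum_x prod_weight x * h x.

Lemma eq_expect (h1 h2 : {ffun I -> T} -> R) : h1 =1 h2 -> expect h1 = expect h2.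
Proof. by move=> e; apply: eq_bigr => x _; rewrite e. Qed.

Lemma expectD (h1 h2 : {ffun I -> T} -> R) :
  expect (fun x => h1 x + h2 x) = expect h1 + expect h2.
Proof. by rewrite /expect -big_split; apply: eq_bigr => x _; rewrite mulrDr. Qed.

Lemma expectZ c (h : {ffun I -> T} -> R) : expect (fun x => c * h x) = c * expect h.
Proof. by rewrite /expect mulr_sumr; apply: eq_bigr => x _; rewrite mulrCA. Qed.

Lemma expectB (h1 h2 : {ffun I -> T} -> R) :
  expect (fun x => h1 x - h2 x) = expect h1 - expect h2.
Proof.
rewrite -mulN1r -expectZ -expectD; apply: eq_expect => x; by rewrite mulN1r.
Qed.

Lemma expect_sum (J : finType) (h : J -> {ffun I -> T} -> R) :
  expect (fun x => \sum_j h j x) = \sum_j expect (h j).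
Proof. by rewrite /expect exchange_big; apply: eq_bigr => x _; rewrite mulr_sumr. Qed.

Lemma prod_weight_ge0 x : 0 <= prod_weight x.
Proof. exact: prodr_ge0. Qed.

Lemma ler_expect (h1 h2 : {ffun I -> T} -> R) :
  (forall x, h1 x <= h2 x) -> expect h1 <= expect h2.
Proof. by move=> le_h; apply: ler_sum => x _; rewrite ler_wpM2l ?prod_weight_ge0. Qed.

Lemma expect_ge0 (h : {ffun I -> T} -> R) : (forall x, 0 <= h x) -> 0 <= expect h.
Proof. by move=> h_ge0; apply: sumr_ge0 => x _; rewrite mulr_ge0 ?prod_weight_ge0. Qed.

Lemma expect_prod (f : I -> T -> R) :
  expect (fun x => \prod_i f i (x i)) = \prod_i \sum_t mu t * f i t.
Proof.
rewrite /expect /prod_weight (bigA_distr_bigA (fun i t => mu t * f i t)).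
by apply: eq_bigr => x _; rewrite big_split.
Qed.

Lemma expect_prod_set (B : {set I}) (g : T -> R) :
  expect (fun x => \prod_(i in B) g (x i)) = (\sum_t mu t * g t) ^+ #|B|.
Proof.
under eq_expect do rewrite big_mkcond.
rewrite (expect_prod (fun i t => if i \in B then g t else 1)) -prodr_const.
rewrite [RHS]big_mkcond; apply: eq_bigr => i _; case: (i \in B) => //.
by under eq_bigr do rewrite mulr1.
Qed.

Lemma sum_prod_weight : \sum_x prod_weight x = 1.
Proof.
transitivity (expect (fun _ => \prod_(i : I) 1)).
  by apply: eq_bigr => x _; rewrite big1_eq mulr1.
rewrite (expect_prod (fun _ _ => 1)).
by under eq_bigr do under eq_bigr do rewrite mulr1; rewrite mu_sum1 big1_eq.
Qed.

Lemma expect_cst c : expect (fun _ => c) = c.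
Proof. by rewrite /expect -mulr_suml sum_prod_weight mul1r. Qed.

Lemma expect_indicator_le1 (E : pred {ffun I -> T}) : expect (fun x => (E x)%:R) <= 1.
Proof. by rewrite -[leRHS]expect_cst; apply: ler_expect => x; case: (E x). Qed.

(* Take expectations in [2 t h - t^2 h^2 <= 1_E], i.e. [(1 - t h)^2 >= 0] on [E]. *)
Lemma second_moment_ge (E : pred {ffun I -> T}) (h : {ffun I -> T} -> R) t :
  (forall x, ~~ E x -> h x = 0) ->
  2 * t * expect h - t ^+ 2 * expect (fun x => h x ^+ 2) <= expect (fun x => (E x)%:R).
Proof.
move=> h_supp; rewrite -!expectZ -expectB; apply: ler_expect => x.
case: (boolP (E x)) => [_ | /h_supp ->]; last by rewrite !mulr0 expr0n /= mulr0 subrr.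
have := sqr_ge0 (1 - t * h x); rewrite /=; nra.
Qed.

Definition mix (A : {set I}) (x y : {ffun I -> T}) : {ffun I -> T} :=
  [ffun i => if i \in A then x i else y i].

Lemma mixK A x y : mix A (mix A x y) (mix A y x) = x.
Proof. by apply/ffunP => i; rewrite !ffunE; case: (i \in A). Qed.

Lemma prod_weight_mix A x y :
  prod_weight x * prod_weight y = prod_weight (mix A x y) * prod_weight (mix A y x).
Proof.
rewrite /prod_weight -!big_split; apply: eq_bigr => i _; rewrite !ffunE.
by case: (i \in A) => //; apply: mulrC.
Qed.

(* Swapping the [A]-coordinates of two independent samples preserves the product measure. *)
Lemma expect_mix A (h : {ffun I -> T} -> R) :
  \sum_x \sum_y prod_weight x * prod_weight y * h (mix A x y) = expect h.
Proof.
under eq_bigr do under eq_bigr do rewrite (prod_weight_mix A).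
rewrite pair_bigA /=.
pose swap p := (mix A p.1 p.2, mix A p.2 p.1).
have swapK : involutive swap by case=> x y; rewrite /swap /= !mixK.
rewrite (reindex_inj (inv_inj swapK)) /=.
under eq_bigr do rewrite !mixK.
rewrite -(pair_bigA _ (fun u v => prod_weight u * prod_weight v * h u)) /=.
apply: eq_bigr => u _.
by rewrite -mulr_suml -mulr_sumr sum_prod_weight mulr1.
Qed.

Definition depends_on (f : {ffun I -> T} -> R) (A : {set I}) :=
  forall x y : {ffun I -> T}, {in A, x =1 y} -> f x = f y.

Lemma expectM_indep A (f g : {ffun I -> T} -> R) :
  depends_on f A -> depends_on g (~: A) ->
  expect (fun x => f x * g x) = expect f * expect g.
Proof.
move=> f_dep g_dep; rewrite -(expect_mix A) /expect mulr_suml.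
apply: eq_bigr => x _; rewrite mulr_sumr; apply: eq_bigr => y _.
rewrite (f_dep (mix A x y) x); last by move=> i iA; rewrite ffunE iA.
rewrite (g_dep (mix A x y) y); last by move=> i; rewrite inE ffunE => /negbTE ->.
by rewrite mulrACA.
Qed.

Lemma expect_big_prod_indep (J : eqType) (U : J -> {set I})
    (f : J -> {ffun I -> T} -> R) :
  (forall r r' i, i \in U r -> i \in U r' -> r = r') ->
  (forall r, depends_on (f r) (U r)) ->
  forall s : seq J, uniq s ->
  expect (fun x => \prod_(r <- s) f r x) = \prod_(r <- s) expect (f r).
Proof.
move=> U_disj f_dep; elim=> [|a s IH] /=.
  by move=> _; under eq_expect do rewrite big_nil; rewrite big_nil expect_cst.
case/andP=> a_notin_s s_uniq; rewrite big_cons -IH //.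
under eq_expect do rewrite big_cons.
apply: (expectM_indep (A := U a)) => // x y eq_xy.
rewrite big_seq [RHS]big_seq; apply: eq_bigr => r rs; apply: f_dep => i iUr.
apply: eq_xy; rewrite inE; apply: contraNN a_notin_s => iUa.
by rewrite (U_disj _ _ _ iUa iUr).
Qed.

Lemma expect_prod_indep (J : finType) (U : J -> {set I}) (f : J -> {ffun I -> T} -> R) :
  (forall r r' i, i \in U r -> i \in U r' -> r = r') ->
  (forall r, depends_on (f r) (U r)) ->
  expect (fun x => \prod_r f r x) = \prod_r expect (f r).
Proof.
by move=> U_disj f_dep; apply: (expect_big_prod_indep U_disj f_dep); apply: index_enum_uniq.
Qed.

Lemma mu_le1 v : mu v <= 1.
Proof. by rewrite -mu_sum1 (bigD1 v) //= lerDl sumr_ge0. Qed.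

Lemma muD_le1 v w : v != w -> mu v + mu w <= 1.
Proof.
move=> vw; rewrite -mu_sum1 (bigD1 v) //= lerD2l (bigD1 w) 1?eq_sym //=.
by rewrite lerDl sumr_ge0.
Qed.

Lemma sum_mu_eq v : \sum_t mu t * (t == v)%:R = mu v.
Proof. by rewrite (bigD1 v) //= eqxx mulr1 big1 ?addr0 // => t /negbTE ->; rewrite mulr0. Qed.

Lemma sum_mu_neq v : \sum_t mu t * (t != v)%:R = 1 - mu v.
Proof.
rewrite -[X in X - _]mu_sum1 -(sum_mu_eq v) -sumrB; apply: eq_bigr => t _.
by case: (t == v); rewrite /= ?mulr1 ?mulr0 ?subr0 ?subrr.
Qed.

Lemma sum_mu_neq2 v w :
  v != w -> \sum_t mu t * ((t != v)%:R * (t != w)%:R) = 1 - mu v - mu w.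
Proof.
move=> vw; rewrite -[X in X - _ - _]mu_sum1 -(sum_mu_eq v) -(sum_mu_eq w) -!sumrB.
apply: eq_bigr => t _; case: (t =P v) => [->|_]; first by rewrite (negbTE vw) /=; ring.
by case: (t =P w) => [->|_] /=; ring.
Qed.

Definition hits (B : {set I}) (v : T) (x : {ffun I -> T}) : bool := [exists i in B, x i == v].

Definition hit_prob (s : nat) (v : T) : R := 1 - (1 - mu v) ^+ s.

Lemma hit_prob_ge0 s v : 0 <= hit_prob s v.
Proof. by rewrite /hit_prob subr_ge0 exprn_ile1 ?subr_ge0 ?mu_le1 // lerBlDr lerDl. Qed.

Lemma hits_depends B v : depends_on (fun x => (hits B v x)%:R) B.
Proof.
move=> x y eq_xy; suff -> : hits B v x = hits B v y by [].
by apply: eq_existsb => i; case iB: (i \in B); rewrite //= eq_xy.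
Qed.

Lemma hitsE B v x : (hits B v x)%:R = 1 - \prod_(i in B) ((x i != v)%:R : R).
Proof.
case: (boolP (hits B v x)) => [/existsP [i /andP [iB /eqP xi]]|].
  by rewrite (bigD1 i) //= xi eqxx mul0r subr0.
rewrite negb_exists => /forallP miss; rewrite big1 ?subrr // => i iB.
by move: (miss i); rewrite iB /= => ->.
Qed.

Lemma expect_hits B v : expect (fun x => (hits B v x)%:R) = hit_prob #|B| v.
Proof.
under eq_expect do rewrite hitsE.
by rewrite expectB expect_cst (expect_prod_set B (fun t => (t != v)%:R)) sum_mu_neq.
Qed.

Lemma expect_hits2_eq B v w : v != w ->
  expect (fun x => (hits B v x)%:R * (hits B w x)%:R) =
  1 - (1 - mu v) ^+ #|B| - (1 - mu w) ^+ #|B| + (1 - mu v - mu w) ^+ #|B|.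
Proof.
move=> vw.
have split_hits x : (hits B v x)%:R * (hits B w x)%:R =
    1 - \prod_(i in B) ((x i != v)%:R : R) - \prod_(i in B) ((x i != w)%:R : R)
      + \prod_(i in B) ((x i != v)%:R * (x i != w)%:R : R).
  by rewrite !hitsE big_split /=; ring.
rewrite (eq_expect split_hits) expectD !expectB expect_cst.
rewrite (expect_prod_set B (fun t => (t != v)%:R)) (expect_prod_set B (fun t => (t != w)%:R)).
rewrite (expect_prod_set B (fun t => (t != v)%:R * (t != w)%:R)).
by rewrite !sum_mu_neq sum_mu_neq2.
Qed.

Lemma expect_hits2_le B v w : v != w ->
  expect (fun x => (hits B v x)%:R * (hits B w x)%:R) <= hit_prob #|B| v * hit_prob #|B| w.
Proof.
move=> vw; rewrite expect_hits2_eq // /hit_prob.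
set a := 1 - mu v; set b := 1 - mu w; set s := #|B|.
have a_ge0 : 0 <= a by rewrite subr_ge0 mu_le1.
have b_ge0 : 0 <= b by rewrite subr_ge0 mu_le1.
have c_ge0 : 0 <= 1 - mu v - mu w by have := muD_le1 vw; lra.
have c_le_ab : 1 - mu v - mu w <= a * b.
  by have := mulr_ge0 (mu_ge0 v) (mu_ge0 w); rewrite /a /b; lra.
have : (1 - mu v - mu w) ^+ s <= a ^+ s * b ^+ s.
  by rewrite -exprMn lerXn2r ?nnegrE ?mulr_ge0.
lra.
Qed.

(* Chebyshev's sum inequality for the similarly ordered sequences [mu t ^+ q] and [mu t]. *)
Lemma sum_exprS_ge (q : nat) : \sum_t mu t ^+ q <= #|T|%:R * \sum_t mu t ^+ q.+1.
Proof.
have cross_ge0 : 0 <= \sum_v \sum_w (mu v ^+ q - mu w ^+ q) * (mu v - mu w).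
  apply: sumr_ge0 => v _; apply: sumr_ge0 => w _.
  case: (lerP (mu v) (mu w)) => [le_vw | /ltW le_wv].
    by rewrite mulr_le0 // subr_le0 // lerXn2r ?nnegrE.
  by rewrite mulr_ge0 // subr_ge0 // lerXn2r ?nnegrE.
set S := \sum_t mu t ^+ q; set S1 := \sum_t mu t ^+ q.+1.
have expand v : \sum_w (mu v ^+ q - mu w ^+ q) * (mu v - mu w) =
    (mu v ^+ q.+1 *+ #|T| + S1) - (mu v ^+ q + S * mu v).
  transitivity (\sum_w ((mu v ^+ q.+1 + mu w ^+ q.+1) - (mu v ^+ q * mu w + mu w ^+ q * mu v))).
    by apply: eq_bigr => w _; rewrite !exprS; ring.
  by rewrite sumrB !big_split /= sumr_const -mulr_sumr -mulr_suml mu_sum1 mulr1.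
move: cross_ge0; under eq_bigr do rewrite expand.
rewrite sumrB !big_split /= sumrMnl sumr_const -mulr_sumr mu_sum1 -/S1 -/S.
rewrite -mulr_natl; lra.
Qed.

Lemma power_mean_ge (q : nat) : 1 <= #|T|%:R ^+ q * \sum_t mu t ^+ q.+1.
Proof.
elim: q => [|q IH].
  by rewrite expr0 mul1r; under eq_bigr do rewrite expr1; rewrite mu_sum1.
apply: le_trans IH _; rewrite exprSr -mulrA ler_wpM2l ?exprn_ge0 ?ler0n //.
exact: sum_exprS_ge.
Qed.

Section Round.
Variables (q s : nat) (B : 'I_q -> {set I}).
Hypothesis B_disj : forall j j' i, i \in B j -> i \in B j' -> j = j'.
Hypothesis B_card : forall j, #|B j| = s.

Definition hit_all (v : T) (x : {ffun I -> T}) : bool := [forall j, hits (B j) v x].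

Definition common_hit (x : {ffun I -> T}) : bool := [exists v, hit_all v x].

Definition hit_count (x : {ffun I -> T}) : R := \sum_v (hit_all v x)%:R.

Lemma hit_allE v x : (hit_all v x)%:R = \prod_j (hits (B j) v x)%:R :> R.
Proof.
case: (boolP (hit_all v x)) => [/forallP all_hit | /forallPn [j miss_j]].
  by rewrite big1 // => j _; rewrite all_hit.
by rewrite (bigD1 j) //= (negbTE miss_j) mul0r.
Qed.

Lemma expect_hit_all v : expect (fun x => (hit_all v x)%:R) = hit_prob s v ^+ q.
Proof.
under eq_expect do rewrite hit_allE.
rewrite (expect_prod_indep B_disj (fun j => @hits_depends (B j) v)).
by under eq_bigr do rewrite expect_hits B_card; rewrite prodr_const card_ord.
Qed.

Lemma expect_hit_all2 v w :
  expect (fun x => (hit_all v x)%:R * (hit_all w x)%:R)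
    <= (v == w)%:R * hit_prob s v ^+ q + hit_prob s v ^+ q * hit_prob s w ^+ q.
Proof.
case: (eqVneq v w) => [<- | vw].
  under eq_expect do rewrite -natrM mulnb andbb.
  by rewrite expect_hit_all mul1r lerDl mulr_ge0 ?exprn_ge0 ?hit_prob_ge0.
under eq_expect do rewrite !hit_allE -big_split /=.
rewrite mul0r add0r -exprMn.
have -> : (hit_prob s v * hit_prob s w) ^+ q = \prod_(j < q) (hit_prob s v * hit_prob s w).
  by rewrite prodr_const card_ord.
rewrite (expect_prod_indep B_disj (f := fun j x => (hits (B j) v x)%:R * (hits (B j) w x)%:R)).
  apply: ler_prod => j _; rewrite expect_ge0 => [|x]; last by rewrite mulr_ge0.
  by rewrite -(B_card j) expect_hits2_le.
move=> j x y eq_xy.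
by rewrite (@hits_depends (B j) v x y eq_xy) (@hits_depends (B j) w x y eq_xy).
Qed.

Lemma expect_hit_count : expect hit_count = \sum_v hit_prob s v ^+ q.
Proof. by rewrite expect_sum; apply: eq_bigr => v _; rewrite expect_hit_all. Qed.

Lemma expect_hit_count2 (a := \sum_v hit_prob s v ^+ q) :
  expect (fun x => hit_count x ^+ 2) <= a + a ^+ 2.
Proof.
have sq x : hit_count x ^+ 2 = \sum_v \sum_w (hit_all v x)%:R * (hit_all w x)%:R.
  by rewrite expr2 /hit_count mulr_suml; apply: eq_bigr => v _; rewrite mulr_sumr.
rewrite (eq_expect sq) expect_sum; under eq_bigr do rewrite expect_sum.
apply: le_trans (ler_sum _ (fun v _ => ler_sum _ (fun w _ => expect_hit_all2 v w))) _.
rewrite /a expr2 mulr_suml -big_split /=; apply: ler_sum => v _.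
rewrite big_split /= -mulr_sumr lerD2r (bigD1 v) //= eqxx mul1r big1 ?addr0 // => w.
by rewrite eq_sym => /negbTE ->; rewrite mul0r.
Qed.

Lemma hit_count_eq0 x : ~~ common_hit x -> hit_count x = 0.
Proof.
rewrite negb_exists => /forallP miss; rewrite /hit_count big1 // => v _.
by rewrite (negbTE (miss v)).
Qed.

Lemma common_hit_eq (x y : {ffun I -> T}) :
  {in \bigcup_j B j, x =1 y} -> common_hit x = common_hit y.
Proof.
move=> eq_xy; apply: eq_existsb => v; apply: eq_forallb => j; apply: eq_existsb => i.
by case iB: (i \in B j); rewrite //= eq_xy //; apply/bigcupP; exists j.
Qed.

Lemma prob_common_hit_ge :
  1 <= (2 ^+ q - 1) * ((s%:R / 2) ^+ q * \sum_t mu t ^+ q) ->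
  2^-1 ^+ q <= expect (fun x => (common_hit x)%:R).
Proof.
move=> hyp.
case: (boolP [exists v, 2^-1 <= hit_prob s v]) => [/existsP [v half_le] | /existsPn small].
  apply: le_trans (_ : hit_prob s v ^+ q <= _).
    by rewrite lerXn2r // nnegrE ?invr_ge0 ?ler0n ?hit_prob_ge0.
  rewrite -expect_hit_all; apply: ler_expect => x.
  case: (boolP (hit_all v x)) => //= hit_v.
  by have -> : common_hit x by apply/existsP; exists v.
pose a := \sum_v hit_prob s v ^+ q.
have a_ge0 : 0 <= a by rewrite sumr_ge0 // => v _; rewrite exprn_ge0 ?hit_prob_ge0.
have a_large : 1 <= (2 ^+ q - 1) * a.
  apply: le_trans hyp _; rewrite ler_wpM2l ?subr_ge0 ?exprn_ege1 ?ler1n //.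
  rewrite mulr_sumr; apply: ler_sum => v _.
  rewrite -exprMn lerXn2r ?nnegrE ?hit_prob_ge0 ?mulr_ge0 ?divr_ge0 ?ler0n //.
  apply: hit_prob_ge; first by rewrite mu_ge0 mu_le1.
  by move: (small v); rewrite -ltNge /hit_prob; lra.
apply: le_trans (ratio_ge_half_pow a_ge0 a_large) _.
set t := (1 + a)^-1.
apply: le_trans (second_moment_ge t hit_count_eq0); rewrite expect_hit_count -/a.
have -> : a / (1 + a) = 2 * t * a - t ^+ 2 * (a + a ^+ 2) by rewrite /t; field; lra.
by rewrite lerD2l lerN2 ler_wpM2l ?sqr_ge0 ?expect_hit_count2.
Qed.

End Round.

End ProductMeasure.

Lemma two_thirds_pow (R : realFieldType) (q : nat) :
  (2 <= q)%N -> 1 <= (2 ^+ q - 1) * (2 / 3) ^+ q :> R.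
Proof.
case: q => [|[|q]] // _; elim: q => [|q IH]; first by rewrite !expr2; lra.
have : 0 <= 2 ^+ q.+2 :> R by rewrite exprn_ge0.
have : 0 <= (2 / 3) ^+ q.+2 :> R by rewrite exprn_ge0.
move: IH; rewrite [X in _ -> _ <= (X - 1) * _]exprS [X in _ -> _ <= _ * X]exprS; nra.
Qed.

Lemma half_pow_lt1 (R : realFieldType) (q : nat) : (0 < q)%N -> 2^-1 ^+ q < 1 :> R.
Proof. by move=> q_gt0; rewrite expr_lt1 ?invr_ge0 ?ler0n -?lt0n // invf_lt1 ?ltr1n. Qed.

Lemma half_pow_le_ln (R : realType) (q : nat) :
  (0 < q)%N -> 2^-1 ^+ (q + 2) <= - 4^-1 * ln (1 - 2^-1 ^+ q) :> R.
Proof.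
move=> q_gt0; have := @le_ln1Dx R (- 2^-1 ^+ q).
rewrite ltrN2 => /(_ (half_pow_lt1 R q_gt0)).
by rewrite exprD expr2; lra.
Qed.

Lemma expr_le_expR (R : realType) (b c N : R) (k z : nat) :
  0 < b <= 1 -> 0 < N -> z%:R <= 4 * N * k%:R -> c <= - 4^-1 * ln b ->
  b ^+ k <= expR (- (c * z%:R / N)).
Proof.
move=> /andP [b_gt0 b_le1] N_gt0 z_le c_le.
rewrite -[b in b ^+ k](lnK b_gt0) -expRM_natl ler_expR.
have lnb_le0 : ln b <= 0 by rewrite ln_le0.
have u_le : z%:R / N <= 4 * k%:R by rewrite ler_pdivrMr //; lra.
have u_ge0 : 0 <= z%:R / N by rewrite divr_ge0 ?ler0n ?ltW.
have : c * (z%:R / N) <= - 4^-1 * ln b * (z%:R / N) by rewrite ler_wpM2r.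
have : ln b * (k%:R - z%:R / N / 4) <= 0 by rewrite mulr_le0_ge0 //; lra.
rewrite mulrA; nra.
Qed.

Lemma block_index_uniq (a b r r' i : nat) :
  (a + r * b <= i < a + r.+1 * b)%N -> (a + r' * b <= i < a + r'.+1 * b)%N -> r = r'.
Proof.
move=> /andP [ri ir] /andP [r'i ir']; case: (ltngtP r r') => // lt_r.
  have : (r.+1 * b <= r' * b)%N by rewrite leq_mul2r lt_r orbT.
  lia.
have : (r'.+1 * b <= r * b)%N by rewrite leq_mul2r lt_r orbT.
lia.
Qed.

Section SubBlocks.
Variables (q z S : nat).

Definition sub_block (r j : nat) : {set 'I_(q * z)} :=
  [set i : 'I_(q * z) | (j * z + r * S <= i < j * z + r * S + S)%N].

Lemma mem_sub_block r (j : 'I_q) (i : 'I_(q * z)) : (r.+1 * S <= z)%N ->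
  i \in sub_block r j = (j * z + r * S <= i < j * z + r.+1 * S)%N.
Proof. by rewrite inE mulSn; lia. Qed.

Lemma sub_block_in_block r (j : 'I_q) (i : 'I_(q * z)) : (r.+1 * S <= z)%N ->
  i \in sub_block r j -> (j * z <= i < j.+1 * z)%N.
Proof. by move=> rS; rewrite mem_sub_block // mulSn; lia. Qed.

Lemma card_sub_block r (j : 'I_q) : (r.+1 * S <= z)%N -> #|sub_block r j| = S.
Proof.
move=> rS; rewrite -sum1_card.
transitivity (\sum_(j * z + r * S <= i < j * z + r * S + S) 1)%N; last first.
  by rewrite sum_nat_const_nat muln1 addKn.
have : (j.+1 * z <= q * z)%N by rewrite leq_mul2r ltn_ord orbT.
rewrite mulSn => jz; rewrite (big_nat_widen _ _ (q * z)); last by lia.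
rewrite (big_nat_widenl _ 0) // big_mkord.
by apply: eq_bigl => i; rewrite inE andbC.
Qed.

Lemma sub_block_disj r r' (j j' : 'I_q) i :
  (r.+1 * S <= z)%N -> (r'.+1 * S <= z)%N ->
  i \in sub_block r j -> i \in sub_block r' j' -> j = j' /\ r = r'.
Proof.
move=> rS r'S ij ij'.
have eq_j : j = j'.
  apply: val_inj; apply: (@block_index_uniq 0 z _ _ i); rewrite !add0n.
    exact: sub_block_in_block ij.
  exact: sub_block_in_block ij'.
split=> //; move: ij ij'; rewrite -eq_j !mem_sub_block //.
exact: block_index_uniq.
Qed.

Lemma round_end_le (k : nat) (r : 'I_k) : (k * S <= z)%N -> (r.+1 * S <= z)%N.
Proof. by move/(leq_trans _); apply; rewrite leq_mul2r ltn_ord orbT. Qed.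

Lemma round_disj (k : nat) : (k * S <= z)%N ->
  forall (r r' : 'I_k) i, i \in \bigcup_(j < q) sub_block r j ->
    i \in \bigcup_(j < q) sub_block r' j -> r = r'.
Proof.
move=> kS r r' i /bigcupP [j _ ij] /bigcupP [j' _ ij']; apply: val_inj.
by case: (sub_block_disj (round_end_le r kS) (round_end_le r' kS) ij ij').
Qed.

Lemma common_hit_collision (n r : nat) (x : {ffun 'I_(q * z) -> 'I_n}) :
  (r.+1 * S <= z)%N -> common_hit (fun j : 'I_q => sub_block r j) x ->
  block_collision (q:=q) (z:=z) x.
Proof.
move=> rS /existsP [v /forallP hit_v].
have : forall j : 'I_q, exists i, (i \in sub_block r j) && (x i == v).
  by move=> j; have /existsP := hit_v j.
case/fin_all_exists => f f_hit.
apply/existsP; exists [ffun j => f j]; apply/andP; split.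
  apply/forallP => j; rewrite ffunE.
  by case/andP: (f_hit j) => /(sub_block_in_block rS).
apply/forallP => j; apply/forallP => j'; rewrite !ffunE.
by case/andP: (f_hit j) => _ /eqP ->; case/andP: (f_hit j') => _ /eqP ->.
Qed.

End SubBlocks.

Lemma iid_probE (R : realType) (n m : nat) (mu : 'I_n -> R) (E : pred {ffun 'I_m -> 'I_n}) :
  iid_prob mu E = expect mu (fun x => (E x)%:R).
Proof.
rewrite /iid_prob /expect big_mkcond; apply: eq_bigr => x _.
by case: (E x); rewrite ?mulr1 ?mulr0.
Qed.

Lemma prob_block_collision_ge (R : realType) (n q z S : nat) (mu : 'I_n -> R) :
  is_prob_measure mu -> (0 < S)%N ->
  1 <= (2 ^+ q - 1) * ((S%:R / 2) ^+ q * \sum_t mu t ^+ q) ->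
  1 - (1 - 2^-1 ^+ q) ^+ (z %/ S) <= iid_prob mu (block_collision (q:=q) (z:=z)).
Proof.
move=> [mu_ge0 mu_sum1] S_gt0 hyp; set k := (z %/ S)%N.
have kS : (k * S <= z)%N := leq_divM z S.
pose fail (r : 'I_k) (x : {ffun 'I_(q * z) -> 'I_n}) : R :=
  1 - (common_hit (fun j : 'I_q => sub_block q z S r j) x)%:R.
have fail_dep (r : 'I_k) : depends_on (fail r) (\bigcup_(j < q) sub_block q z S r j).
  by move=> x y eq_xy; rewrite /fail (common_hit_eq eq_xy).
have fail_le (r : 'I_k) : 0 <= expect mu (fail r) <= 1 - 2^-1 ^+ q.
  have rS := round_end_le r kS.
  rewrite expectB expect_cst // subr_ge0 expect_indicator_le1 //= lerD2l lerN2.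
  apply: (prob_common_hit_ge _ _ (s := S)) => // [j j' i ij ij'|j]; last exact: card_sub_block.
  by case: (sub_block_disj rS rS ij ij').
have collision_fail x : 1 - (block_collision x)%:R <= \prod_r fail r x.
  case: (boolP (block_collision x)) => [_ | no_coll].
    by rewrite subrr prodr_ge0 // => r _; rewrite /fail; case: common_hit; rewrite ?subrr ?subr0.
  rewrite subr0 big1 // => r _; rewrite /fail.
  case: (boolP (common_hit _ x)) => [|_]; last by rewrite subr0.
  by move/(common_hit_collision (round_end_le r kS)) => coll; rewrite coll in no_coll.
have := ler_expect mu_ge0 collision_fail.
rewrite expectB expect_cst // (expect_prod_indep mu_sum1 (round_disj kS) fail_dep) -iid_probE.
have -> : (1 - 2^-1 ^+ q) ^+ k = \prod_(r < k) (1 - 2^-1 ^+ q) :> R.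
  by rewrite prodr_const card_ord.
move=> le_fail; rewrite lerBlDr -lerBlDl.
exact: le_trans le_fail (ler_prod _ (fun r _ => fail_le r)).
Qed.

Lemma block_collision_q_le1 (n q z : nat) (x : {ffun 'I_(q * z) -> 'I_n}) :
  (q <= 1)%N -> (0 < z)%N -> block_collision x.
Proof.
case: q x => [|[|//]] x _ z_gt0.
  apply/existsP; exists [ffun j => cast_ord (esym (mul0n z)) j].
  by apply/andP; split; apply/forallP => -[].
have z0 : (0 < 1 * z)%N by rewrite mul1n.
apply/existsP; exists [ffun _ => Ordinal z0]; apply/andP; split.
  by apply/forallP => j; rewrite ffunE (ord1 j).
by apply/forallP => j; apply/forallP => j'; rewrite !ffunE.
Qed.

Lemma prob_measure_dom_gt0 (R : realType) (n : nat) (mu : 'I_n -> R) :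
  is_prob_measure mu -> (0 < n)%N.
Proof. by case: n mu => // mu [_]; rewrite big_ord0 => /esym/eqP; rewrite oner_eq0. Qed.

Lemma exists_round_length (R : realType) (N : R) (z : nat) :
  1 <= N -> 2 * N <= z%:R ->
  exists2 S : nat, 4 / 3 * N <= S%:R & z%:R <= 4 * N * (z %/ S)%:R.
Proof.
move=> N_ge1 z_ge; pose S := (Num.truncn (4 / 3 * N)).+1.
have N43_ge0 : 0 <= 4 / 3 * N by lra.
have S_gt : 4 / 3 * N < S%:R by rewrite /S truncnS_gt.
have S_le : S%:R <= 4 / 3 * N + 1 by rewrite /S -natr1 lerD2r truncn_le.
exists S; first exact: ltW S_gt.
have S_le_z : (S <= z)%N by rewrite /S truncn_lt_nat //; lra.
have k_ge1 : 1 <= (z %/ S)%:R :> R by rewrite ler1n divn_gt0 // S_le_z.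
have : (z.+1 <= (z %/ S).+1 * S)%N by apply: ltn_ceil.
rewrite -(ler_nat R) natrM -natr1 -[(z %/ S).+1%:R]natr1 => z_lt.
have : ((z %/ S)%:R + 1) * S%:R <= ((z %/ S)%:R + 1) * (4 / 3 * N + 1) :> R.
  by rewrite ler_wpM2l //; lra.
nra.
Qed.

Lemma round_condition (R : realType) (n : nat) (mu : 'I_n -> R) (q S : nat) (N : R) :
  is_prob_measure mu -> (2 <= q)%N -> 0 <= N -> N ^+ q = n%:R ^+ q.-1 ->
  4 / 3 * N <= S%:R ->
  1 <= (2 ^+ q - 1) * ((S%:R / 2) ^+ q * \sum_t mu t ^+ q).
Proof.
move=> [mu_ge0 mu_sum1] q_ge2 N_ge0 NXq S_ge.
set sum_mu := \sum_t mu t ^+ q.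
have mean_ge : 1 <= n%:R ^+ q.-1 * sum_mu.
  by have := power_mean_ge mu_ge0 mu_sum1 q.-1; rewrite card_ord prednK // ltnW.
have S_ge_pow : (2 / 3) ^+ q * n%:R ^+ q.-1 <= (S%:R / 2) ^+ q :> R.
  by rewrite -NXq -exprMn lerXn2r ?nnegrE; lra.
apply: le_trans (_ : (2 ^+ q - 1) * ((2 / 3) ^+ q * n%:R ^+ q.-1 * sum_mu) <= _).
  rewrite mulrA [X in _ <= X](_ : _ = ((2 ^+ q - 1) * (2 / 3) ^+ q) * (n%:R ^+ q.-1 * sum_mu)).
    by rewrite -[leLHS]mulr1 ler_pM ?two_thirds_pow.
  by rewrite !mulrA.
rewrite ler_wpM2l ?ler_wpM2r ?subr_ge0 ?exprn_ege1 ?ler1n //.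
by rewrite sumr_ge0 // => t _; rewrite exprn_ge0.
Qed.

Lemma root_exponent_ge0 (R : realFieldType) (q : nat) : 0 <= 1 - q%:R^-1 :> R.
Proof. by case: q => [|q]; rewrite ?invr0 ?subr0 // subr_ge0 invf_le1 ?ler1n. Qed.

Lemma powR_root_ge1 (R : realType) (n q : nat) :
  (0 < n)%N -> 1 <= n%:R `^ (1 - q%:R^-1) :> R.
Proof.
move=> n_gt0; rewrite -[leLHS](powRr0 n%:R).
by apply: ler_powR; rewrite ?ler1n ?root_exponent_ge0.
Qed.

Lemma powR_root_exprn (R : realType) (n q : nat) :
  (0 < q)%N -> (n%:R `^ (1 - q%:R^-1)) ^+ q = n%:R ^+ q.-1 :> R.
Proof.
move=> q_gt0; rewrite -powR_mulrn ?powR_ge0 // -powRrM -powR_mulrn ?ler0n //.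
by rewrite mulrBl mul1r mulVf ?pnatr_eq0 -?lt0n // -subn1 natrB.
Qed.

Lemma collision_prob_ge_expR (R : realType) (n : nat) (mu : 'I_n -> R) (q z : nat) (c : R) :
  is_prob_measure mu -> (2 <= q)%N -> 2 * n%:R `^ (1 - q%:R^-1) <= z%:R :> R ->
  c <= - 4^-1 * ln (1 - 2^-1 ^+ q) ->
  1 - expR (- (c * z%:R / n%:R `^ (1 - q%:R^-1))) <= iid_prob mu (block_collision (q:=q) (z:=z)).
Proof.
move=> mu_prob q_ge2 z_ge c_le; set N := n%:R `^ _ in z_ge *.
have N_ge1 : 1 <= N by rewrite powR_root_ge1 // (prob_measure_dom_gt0 mu_prob).
have [S S_ge z_le] := exists_round_length N_ge1 z_ge.
have S_gt0 : (0 < S)%N by rewrite -(ltr_nat R); lra.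
have NXq : N ^+ q = n%:R ^+ q.-1 by rewrite powR_root_exprn // ltnW.
have round_cond := round_condition mu_prob q_ge2 (ltW (lt_le_trans ltr01 N_ge1)) NXq S_ge.
apply: le_trans (prob_block_collision_ge z mu_prob S_gt0 round_cond).
rewrite lerD2l lerN2; apply: expr_le_expR => //; last by lra.
have := half_pow_lt1 R (ltnW q_ge2).
have : 0 <= 2^-1 ^+ q :> R by rewrite exprn_ge0 ?invr_ge0.
lra.
Qed.

Theorem lemma2p3 (R : realType) (n : nat) (mu : 'I_n -> R) (q z : nat) :
  is_prob_measure mu ->
  2 * (n%:R `^ (1 - q%:R^-1)) <= z%:R :> R ->
  (forall c : R, c <= - (4^-1) * ln (1 - 2^-1 ^+ q) ->
     1 - expR (- (c * z%:R / (n%:R `^ (1 - q%:R^-1))))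
       <= iid_prob mu (block_collision (q:=q) (z:=z))) /\
  (forall c : R, c <= 2^-1 ^+ (q + 2) ->
     1 - expR (- (c * z%:R / (n%:R `^ (1 - q%:R^-1))))
       <= iid_prob mu (block_collision (q:=q) (z:=z))).
Proof.
move=> mu_prob z_ge.
case: (leqP q 1) => [q_le1 | q_gt1].
  have z_gt0 : (0 < z)%N.
    have := @powR_root_ge1 R n q (prob_measure_dom_gt0 mu_prob).
    by rewrite -(ltr_nat R); lra.
  have -> : iid_prob mu (block_collision (q:=q) (z:=z)) = 1.
    rewrite iid_probE (eq_expect _ (h2 := fun=> 1)) ?expect_cst //; first by case: mu_prob.
    by move=> x; rewrite block_collision_q_le1.
  by split=> c _; rewrite lerBlDr lerDl ltW ?expR_gt0.
have bound_ln := collision_prob_ge_expR mu_prob q_gt1 z_ge.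
split=> // c c_le; apply: bound_ln.
exact: le_trans c_le (@half_pow_le_ln R q (ltnW q_gt1)).
Qed.
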